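(* Every digraph $D$ with minimum dicut size $2$ contains $2$ arc-disjoint dijoins.
   Context: Digraphs are finite and loopless; parallel arcs allowed. A dicut is $\delta^+_D(U)$ (arcs leaving $U$) with $\emptyset\neq U\subsetneq V$ and no arc entering $U$; a dijoin is an arc set meeting every dicut; ''$D$ has minimum dicut size $\tau$'' means $D$ has at least one dicut and the minimum number of arcs in a dicut is $\tau$. *)

From mathcomp Require Import all_boot.
Set Implicit Arguments. Unset Strict Implicit. Unset Printing Implicit Defensive.

(* A finite loopless digraph with possibly parallel arcs: vertex type V,
   arc type A (both finite), tail and head maps, no loops. *)
Definition loopless (V A : finType) (tl hd : A -> V) : Prop :=
  forall a : A, tl a != hd a.

Definition out_arcs (V A : finType) (tl hd : A -> V) (U : {set V}) : {set A} :=
  [set a | (tl a \in U) && (hd a \notin U)].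

Definition in_arcs (V A : finType) (tl hd : A -> V) (U : {set V}) : {set A} :=
  [set a | (tl a \notin U) && (hd a \in U)].

Definition dicut_shore (V A : finType) (tl hd : A -> V) (U : {set V}) : Prop :=
  U != set0 /\ U != setT /\ in_arcs tl hd U = set0.

Definition is_dicut (V A : finType) (tl hd : A -> V) (C : {set A}) : Prop :=
  exists U : {set V}, dicut_shore tl hd U /\ C = out_arcs tl hd U.

Definition is_dijoin (V A : finType) (tl hd : A -> V) (J : {set A}) : Prop :=
  forall C : {set A}, is_dicut tl hd C -> J :&: C != set0.

Definition min_dicut_size (V A : finType) (tl hd : A -> V) (tau : nat) : Prop :=
  (exists C, is_dicut tl hd C /\ #|C| = tau) /\
  (forall C, is_dicut tl hd C -> tau <= #|C|).

From mathcomp Require Import all_boot.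
Set Implicit Arguments. Unset Strict Implicit. Unset Printing Implicit Defensive.

(* A vertex set crossed by arcs in one direction only is the shore of a dicut
   (or the complement of one), and one crossed in both directions is crossed
   twice; so minimum dicut size 2 makes the underlying graph bridgeless.  By
   Robbins' theorem it then has a strongly connected orientation, built by
   adding ears to a strongly connected vertex set.  Let J be the arcs this
   orientation keeps.  In it some arc enters and some arc leaves the shore of
   any dicut of D; as no arc of D enters the shore, the first is a reversed
   arc and the second a kept one, both in the dicut.  So J and its complement
   are disjoint dijoins. *)

Lemma connect_enter (T : finType) (e : rel T) (U : {set T}) u v :
  connect e u v -> u \notin U -> v \in U ->
  exists u' v', [/\ e u' v', u' \notin U & v' \in U].
Proof.
case/connectP => p; elim: p u => [|z p IHp] u /=; first by move=> _ -> /negPf->.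
case/andP=> euz pz vE uU vU; have [zU|zU] := boolP (z \in U); first by exists u, z.
exact: IHp pz vE zU vU.
Qed.

Lemma path_index (T : eqType) (x : T) (p : seq T) :
  uniq (x :: p) -> path (fun u v => index u (x :: p) < index v (x :: p)) x p.
Proof.
move=> Up; apply/(pathP x) => i ltip.
by rewrite -[nth x p i]/(nth x (x :: p) i.+1) !index_uniq // ltnW.
Qed.

Lemma path_connect_last (T : finType) (e : rel T) x p :
  path e x p -> {in x :: p, forall v, connect e v (last x p)}.
Proof.
elim: p x => [|z p IHp] x /=; first by move=> _ v /[!inE] /eqP->.
case/andP=> exz pz v /[!inE] /predU1P[->|vp]; last exact: IHp.
exact: connect_trans (connect1 exz) (IHp z pz z (mem_head z p)).
Qed.

Section Digraph.
Variables (V A : finType) (tl hd : A -> V).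

Definition joins (a : A) (u v : V) :=
  ((tl a == u) && (hd a == v)) || ((tl a == v) && (hd a == u)).

Definition crossing (X : {set V}) : {set A} :=
  [set a | (tl a \in X) != (hd a \in X)].

Definition bridgeless :=
  forall X : {set V}, X != set0 -> X != setT -> 1 < #|crossing X|.

Lemma joins_crossing X a u v :
  joins a u v -> (a \in crossing X) = ((u \in X) != (v \in X)).
Proof. by rewrite inE => /orP[]/andP[/eqP-> /eqP->] //; rewrite eq_sym. Qed.

Lemma crossing_joins X a :
  a \in crossing X -> exists x w, [/\ x \in X, w \notin X & joins a x w].
Proof.
rewrite inE /joins; case: (boolP (tl a \in X)) => /= [tX hX|tX /negPn hX].
  by exists (tl a), (hd a); rewrite !eqxx.
by exists (hd a), (tl a); rewrite !eqxx orbT.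
Qed.

Lemma in_arcsC X : in_arcs tl hd (~: X) = out_arcs tl hd X.
Proof. by apply/setP => a; rewrite !inE negbK andbC. Qed.

Lemma crossingE X : crossing X = out_arcs tl hd X :|: in_arcs tl hd X.
Proof. by apply/setP => a; rewrite !inE; do 2!case: (_ \in X). Qed.

Lemma dicut_bridgeless :
  (forall C, is_dicut tl hd C -> 2 <= #|C|) -> bridgeless.
Proof.
move=> dicut_ge2 X X0 XT; rewrite crossingE.
have [in0|[b inb]] := set_0Vmem (in_arcs tl hd X).
  apply: leq_trans (dicut_ge2 _ _) (subset_leq_card (subsetUl _ _)).
  by exists X.
have [out0|[c outc]] := set_0Vmem (out_arcs tl hd X).
  apply: leq_trans (dicut_ge2 (out_arcs tl hd (~: X)) _) _.
    exists (~: X); split=> //; split; [|split; last by rewrite in_arcsC].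
      by rewrite -[set0]setCT (inj_eq (@setC_inj _)).
    by rewrite -setC0 (inj_eq (@setC_inj _)).
  by rewrite -in_arcsC setCK subset_leq_card ?subsetUr.
apply/card_gt1P; exists c, b; rewrite !inE in inb outc *.
rewrite inb outc orbT; split=> //; apply: contraTneq outc => ->.
by case/andP: inb => /negPf->.
Qed.

Definition orient (W : {set V}) (J : {set A}) : rel V := fun u v =>
  [exists a, [&& tl a \in W, hd a \in W &
     if a \in J then (tl a == u) && (hd a == v) else (tl a == v) && (hd a == u)]].

Definition strongly_connected (W : {set V}) (J : {set A}) :=
  {in W &, forall u v, connect (orient W J) u v}.

Lemma orient_fwd (W : {set V}) (J : {set A}) a :
  tl a \in W -> hd a \in W -> a \in J -> orient W J (tl a) (hd a).
Proof. by move=> tW hW aJ; apply/existsP; exists a; rewrite tW hW aJ !eqxx. Qed.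

Lemma orient_bwd (W : {set V}) (J : {set A}) a :
  tl a \in W -> hd a \in W -> a \notin J -> orient W J (hd a) (tl a).
Proof.
by move=> tW hW /negPf aJ; apply/existsP; exists a; rewrite tW hW aJ !eqxx.
Qed.

Lemma orientC (W : {set V}) (J : {set A}) u v :
  orient W (~: J) u v = orient W J v u.
Proof.
by apply/existsP/existsP => -[a /and3P[tW hW]]; rewrite ?inE => aE;
  exists a; rewrite tW hW ?inE; case: (a \in J) aE.
Qed.

Lemma strongly_connectedC (W : {set V}) (J : {set A}) :
  strongly_connected W J -> strongly_connected W (~: J).
Proof.
move=> scJ u v uW vW.
by rewrite (eq_connect (orientC W J) u v) (connect_rev (orient W J) u v) /= scJ.
Qed.

Lemma strongly_connected_dijoinC (J : {set A}) :
  strongly_connected setT J -> is_dijoin tl hd (~: J).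
Proof.
move=> scJ _ [U [[/set0Pn[v vU] [UT inU0]] ->]].
have [u uU] : exists u, u \notin U.
  apply/existsP; apply: contraNT UT => /existsPn uU.
  by apply/eqP/setP => u; rewrite inE -[u \in U]negbK uU.
have [u' [v' [/existsP[a /and3P[_ _ aE]] u'U v'U]]] :=
  connect_enter (scJ u v (in_setT u) (in_setT v)) uU vU.
move: aE; case: ifP => aJ /andP[/eqP tE /eqP hE]; rewrite -{}tE -{}hE in u'U v'U.
  have : a \in in_arcs tl hd U by rewrite inE u'U v'U.
  by rewrite inU0 inE.
by apply/set0Pn; exists a; rewrite !inE aJ u'U v'U.
Qed.

Lemma strongly_connected_dijoins (J : {set A}) :
  strongly_connected setT J -> is_dijoin tl hd J /\ is_dijoin tl hd (~: J).
Proof.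
move=> scJ; split; last exact: strongly_connected_dijoinC.
by rewrite -[J]setCK; apply/strongly_connected_dijoinC/strongly_connectedC.
Qed.

Section Ear.
Variables (W : {set V}) (J : {set A}) (a0 b : A) (x w y : V) (p : seq V).
Hypotheses (scW : strongly_connected W J) (xW : x \in W) (yW : y \in W).
Hypotheses (a0_xw : joins a0 x w) (b_y : joins b (last w p) y) (ba0 : b != a0).
Hypotheses (p_adj : path (fun u v => [exists e, joins e u v]) w p).
Hypotheses (ear_out : {subset w :: p <= [predC W]}) (ear_uniq : uniq (w :: p)).

Let W' := W :|: [set v in w :: p].

(* Arcs not inside [W] are directed up this ranking, except [a0], which is
   directed from [W] into the ear. *)
Let rank v := if v \in W then size (w :: p) else index v (w :: p).

Let J' := [set e | if (tl e \in W) && (hd e \in W) then e \in J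
                   else (e == a0) != (rank (tl e) < rank (hd e))].

Lemma ear_sub_W' : {subset w :: p <= W'}.
Proof. by move=> v vp; rewrite inE [v \in [set _ in _]]inE vp orbT. Qed.

Lemma orient_ear_sub : subrel (orient W J) (orient W' J').
Proof.
move=> u v /existsP[a /and3P[tW hW aE]]; apply/existsP; exists a.
by rewrite !inE tW hW.
Qed.

Lemma orient_ear_rank e u v : joins e u v -> e != a0 -> u \notin W ->
  u \in W' -> v \in W' -> rank u < rank v -> orient W' J' u v.
Proof.
move=> + /negPf ea0 uW uW' vW' lt_uv.
case/orP=> /andP[/eqP tE /eqP hE]; rewrite -tE -hE in uW uW' vW' lt_uv *.
  by apply: orient_fwd; rewrite // inE (negPf uW) ea0 /= lt_uv.
apply: orient_bwd => //; rewrite inE (negPf uW) andbF ea0 /=.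
by rewrite ltnNge (ltnW lt_uv).
Qed.

Lemma orient_ear_a0 : orient W' J' x w.
Proof.
have /[!inE] wW := ear_out (mem_head w p).
have xW' : x \in W' by rewrite inE xW.
have wW' := ear_sub_W' (mem_head w p).
have rank_w : rank w = 0 by rewrite /rank (negPf wW) /= eqxx.
case/orP: a0_xw => /andP[/eqP tE /eqP hE].
  rewrite -tE -hE; apply: orient_fwd; rewrite ?tE ?hE //.
  by rewrite inE tE hE (negPf wW) andbF eqxx rank_w /rank xW.
rewrite -tE -hE; apply: orient_bwd; rewrite ?tE ?hE //.
by rewrite inE tE hE (negPf wW) eqxx rank_w /rank xW.
Qed.

Lemma orient_ear_path : path (orient W' J') w p.
Proof.
have /[!inE] wW := ear_out (mem_head w p).
have a0W : a0 \in crossing W by rewrite (joins_crossing _ a0_xw) xW.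
pose adj_up := [rel u v | [exists e, joins e u v] &&
                          (index u (w :: p) < index v (w :: p))].
apply: (@sub_in_path _ [pred v | v \in w :: p] adj_up); last first.
- by rewrite path_relI p_adj path_index.
- by apply/allP.
move=> u v /= up vp /andP[/existsP[e ue] lt_uv].
have /[!inE] uW := ear_out up; have /[!inE] vW := ear_out vp.
apply: (orient_ear_rank ue) => //; try exact: ear_sub_W'.
- have eW : e \notin crossing W.
    by rewrite (joins_crossing _ ue) (negPf uW) (negPf vW).
  by apply: contraNneq eW => ->.
by rewrite /rank (negPf uW) (negPf vW).
Qed.

Lemma orient_ear_last : orient W' J' (last w p) y.
Proof.
have lastp := mem_last w p; have /[!inE] lastW := ear_out lastp.
apply: (orient_ear_rank b_y) => //; first exact: ear_sub_W'.
  by rewrite inE yW.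
by rewrite /rank (negPf lastW) yW index_mem.
Qed.

Lemma ear_strongly_connected : strongly_connected W' J'.
Proof.
have to_W u : u \in W' -> exists2 u', u' \in W & connect (orient W' J') u u'.
  case/setUP=> [uW|/[!inE] up]; first by exists u.
  exists y => //; apply: connect_trans (connect1 orient_ear_last).
  exact: path_connect_last orient_ear_path _ up.
have from_W v : v \in W' -> exists2 v', v' \in W & connect (orient W' J') v' v.
  case/setUP=> [vW|/[!inE] vp]; first by exists v.
  exists x => //; apply: connect_trans (connect1 orient_ear_a0) _.
  exact: path_connect orient_ear_path _ vp.
move=> u v /to_W[u' u'W uu'] /from_W[v' v'W v'v].
apply: connect_trans uu' (connect_trans _ v'v).
exact: connect_sub (fun _ _ h => connect1 (orient_ear_sub h)) _ _ (scW u'W v'W).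
Qed.

End Ear.

Lemma ear_extension (W : {set V}) (J : {set A}) :
  bridgeless -> W != set0 -> W != setT -> strongly_connected W J ->
  exists (W' : {set V}) (J' : {set A}), W \proper W' /\ strongly_connected W' J'.
Proof.
move=> brl W0 WT scW.
have [a0 /crossing_joins[x [w [xW wW a0_xw]]]] : exists a0, a0 \in crossing W.
  by apply/set0Pn; rewrite -card_gt0 ltnW ?brl.
(* [R] is the component of [w] outside [W]; a second arc crossing its
   boundary must end in [W], which closes an ear. *)
pose outside := [rel u v | [&& u \notin W, v \notin W & [exists e, joins e u v]]].
pose R := [set v | connect outside w v].
have R_out v : v \in R -> v \notin W.
  rewrite inE => wv; apply/negP => vW.
  by have [u' [v' [/and3P[_ /negP]]]] := connect_enter wv wW vW.
have wR : w \in R by rewrite inE connect0.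
have xR : x \notin R by apply: contraL xW; apply: R_out.
have [b /setD1P[ba0 /crossing_joins[r [y [rR yR b_ry]]]]] :
    exists b, b \in crossing R :\ a0.
  apply/set0Pn; rewrite -card_gt0.
  have R0 : R != set0 by apply/set0Pn; exists w.
  have RT : R != setT by apply: contraNneq xR => ->; rewrite inE.
  by move: (brl R R0 RT); rewrite (cardsD1 a0); case: (a0 \in _) => [|/ltnW].
have yW : y \in W.
  apply: contraNT yR => yW; rewrite inE (connect_trans (_ : connect _ w r)) //.
    by rewrite -inE.
  by apply: connect1; rewrite /= yW (R_out r rR); apply/existsP; exists b.
have /connectP[p0 /shortenP[p p_out p_uniq _] rE] : connect outside w r.
  by rewrite -inE.
have p_W : {subset w :: p <= [predC W]}.
  by move=> v /(path_connect p_out) wv; rewrite inE R_out // inE.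
have p_adj : path (fun u v => [exists e, joins e u v]) w p.
  by apply: sub_path p_out => u v /and3P[].
rewrite rE in b_ry.
have scJ' := ear_strongly_connected scW xW yW a0_xw b_ry ba0 p_adj p_W p_uniq.
eexists _, _; split; last exact: scJ'.
by apply: properUl; apply/subsetPn; exists w; rewrite ?inE ?eqxx.
Qed.

Theorem bridgeless_strong_orientation :
  bridgeless -> exists J : {set A}, strongly_connected setT J.
Proof.
move=> brl; have [V0|[v0 _]] := set_0Vmem [set: V].
  by exists set0 => u; rewrite V0 inE.
suff grow (W : {set V}) (J : {set A}) : v0 \in W -> strongly_connected W J ->
    exists J', strongly_connected setT J'.
  by apply: (grow [set v0] set0) => [|u v /set1P-> /set1P->]; rewrite ?inE.
have [n] := ubnP #|~: W|; elim: n W J => // n IHn W J ltWn v0W scW.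
have [WT | WT] := eqVneq W setT; first by exists J; rewrite -WT.
have W0 : W != set0 by apply/set0Pn; exists v0.
have [W' [J' [ltWW' scW']]] := ear_extension brl W0 WT scW.
apply: (IHn W' J') scW'; last by apply: (subsetP (proper_sub ltWW')).
by rewrite -ltnS (leq_trans _ ltWn) // ltnS proper_card // properC.
Qed.

End Digraph.

Theorem corollary1 (V A : finType) (tl hd : A -> V) :
  loopless tl hd ->
  min_dicut_size tl hd 2 ->
  exists J1 J2 : {set A},
    [disjoint J1 & J2] /\ is_dijoin tl hd J1 /\ is_dijoin tl hd J2.
Proof.
move=> _ [_ dicut_ge2].
have [J /strongly_connected_dijoins dijoins] :=
  bridgeless_strong_orientation (dicut_bridgeless dicut_ge2).
by exists J, (~: J); rewrite -setI_eq0 setICr eqxx.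
Qed.
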